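(* Consider the online optimization problem with multi-step memory cost described in the context. Assume that for every $t$ the hitting cost $f(\cdot,y_t)$ is $\alpha$-polyhedral for some $\alpha>0$, and let $\beta=\sum_{i=1}^q\|C_i\|$, where $\|C_i\|$ is the matrix norm induced by the $l_p$ vector norm. Let the expert $\pi$ be the algorithm Robust, which chooses $x_t^\pi=\arg\min_{x\in\mathcal X}f(x,y_t)$ for every $t=1,\dots,T$. Then for any $\lambda\ge1$ and $B\ge0$, ERL (with parameters $\lambda,B$, expert Robust and arbitrary proposed actions) satisfies, for every input $\bm s$, $$\mathrm{cost}(\mathrm{ERL},\bm s)\le \lambda\max\!\left(\tfrac{\beta+1}{\alpha},1\right)\mathrm{cost}(\mathrm{OPT},\bm s)+B.$$
   Context: Problem: Let $\mathcal X\subseteq\mathbb R^d$, $\mathcal Y\subseteq\mathbb R^m$, $f:\mathcal X\times\mathcal Y\to[0,\infty)$, $\|\cdot\|$ the $l_p$ norm on $\mathbb R^d$ ($p\ge1$), a memory length $q\ge1$ and matrices $C_1,\dots,C_q\in\mathbb R^{d\times d}$. An instance $\bm s$ consists of given initial actions $x_{1-q},\dots,x_0\in\mathcal X$ (shared by all algorithms) and contexts $y_1,\dots,y_T\in\mathcal Y$. At step $t$ the context $y_t$ is revealed and an online algorithm irrevocably chooses $x_t\in\mathcal X$. The memory cost is $d(x_t,x_{t-q:t-1})=\|x_t-\sum_{i=1}^q C_ix_{t-i}\|$; for a sequence, $\mathrm{cost}(x_{1:t})=\sum_{\tau=1}^t f(x_\tau,y_\tau)+d(x_\tau,x_{\tau-q:\tau-1})$,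 and the total cost of an algorithm is $\mathrm{cost}(x_{1:T})$ of its actions. $\mathrm{cost}(\mathrm{OPT},\bm s)$ is the infimum of the total cost over all $x_1,\dots,x_T\in\mathcal X$ (offline, all contexts known). $\alpha$-polyhedral: $f(\cdot,y)$ has a unique minimizer $x^*\in\mathcal X$ and $f(x,y)-f(x^*,y)\ge\alpha\|x-x^*\|$ for all $x\in\mathcal X$. ERL (multi-step): given $\lambda\ge1$, $B\ge0$, an expert online algorithm $\pi$ running independently with actions $x_t^\pi$ (and $x_t^\pi=x_t$ for the initial indices $t\le0$), and arbitrary proposed actions $\tilde x_t\in\mathbb R^d$. At step $t$, ERL sets $x_t$ to a minimizer of $\tfrac12\|x-\tilde x_t\|^2$ over $x\in\mathcal X$ subject to $$\mathrm{cost}(x_{1:t-1})+f(x,y_t)+d(x,x_{t-q:t-1})+G(x,x_{t-q:t-1},x^\pi_{t-q:t})\le\lambda\,\mathrm{cost}(x^\pi_{1:t})+B,$$ where $x_{1:t-1}$ are ERL's previous actions and $$G(x,x_{t-q:t-1},x^\pi_{t-q:t})=\sum_{k=1}^{\min(q,T-t)}\Big\|C_kx+\sum_{i=1}^{q-k}C_{k+i}x_{t-i}-\sum_{i=0}^{q-k}C_{k+i}x^\pi_{t-i}\Big\|.$$ *)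

From HB Require Import structures.
From mathcomp Require Import all_boot all_order all_algebra.
From mathcomp Require Import all_classical all_reals all_analysis.
Set Implicit Arguments. Unset Strict Implicit. Unset Printing Implicit Defensive.
Import Order.TTheory GRing.Theory Num.Theory.
Local Open Scope classical_set_scope.
Local Open Scope ring_scope.

Section Defs.
Variable R : realType.

Definition lpnorm (p : R) (d : nat) (v : 'cV[R]_d) : R :=
  powR (\sum_(i < d) powR `|v i 0| p) p^-1.

Definition opnorm (p : R) (d : nat) (A : 'M[R]_d) : R :=
  sup [set lpnorm p (A *m v) | v in [set v : 'cV[R]_d | lpnorm p v = 1]].

(* Trajectories are indexed by int time; C k for k = 1..q are the memory
   matrices. *)
Definition memcost (p : R) (d q : nat) (C : nat -> 'M[R]_d)
  (z : 'cV[R]_d) (x : int -> 'cV[R]_d) (t : int) : R :=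
  lpnorm p (z - \sum_(1 <= i < q.+1) C i *m x (t - i%:Z)).

Definition cost (p : R) (d m q : nat) (C : nat -> 'M[R]_d)
  (f : 'cV[R]_d -> 'cV[R]_m -> R) (y : nat -> 'cV[R]_m)
  (x : int -> 'cV[R]_d) (t : nat) : R :=
  \sum_(1 <= tau < t.+1)
     (f (x tau%:Z) (y tau) + memcost p q C (x tau%:Z) x tau%:Z).

Definition Gterm (p : R) (d q T : nat) (C : nat -> 'M[R]_d)
  (z : 'cV[R]_d) (x xpi : int -> 'cV[R]_d) (t : nat) : R :=
  \sum_(1 <= k < (minn q (T - t)).+1)
     lpnorm p (C k *m z
               + \sum_(1 <= i < (q - k).+1) C (k + i)%N *m x (t%:Z - i%:Z)
               - \sum_(0 <= i < (q - k).+1) C (k + i)%N *m xpi (t%:Z - i%:Z)).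

Definition polyhedral (p : R) (d : nat) (alpha : R) (X : set 'cV[R]_d)
  (g : 'cV[R]_d -> R) : Prop :=
  exists xs, X xs /\
    (forall x, X x -> g xs <= g x) /\
    (forall z, X z -> (forall x, X x -> g z <= g x) -> z = xs) /\
    (forall x, X x -> g x - g xs >= alpha * lpnorm p (x - xs)).

Definition starts_from (d : nat) (init x : int -> 'cV[R]_d) : Prop :=
  forall k : int, k <= 0 -> x k = init k.

Definition is_robust (d m T : nat) (X : set 'cV[R]_d)
  (f : 'cV[R]_d -> 'cV[R]_m -> R) (y : nat -> 'cV[R]_m)
  (init xpi : int -> 'cV[R]_d) : Prop :=
  starts_from init xpi /\
  forall t : nat, (1 <= t <= T)%N ->
    X (xpi t%:Z) /\ forall x, X x -> f (xpi t%:Z) (y t) <= f x (y t).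

Definition erl_feasible (p : R) (d m q T : nat) (C : nat -> 'M[R]_d)
  (X : set 'cV[R]_d) (f : 'cV[R]_d -> 'cV[R]_m -> R) (y : nat -> 'cV[R]_m)
  (lambda B : R) (x xpi : int -> 'cV[R]_d) (t : nat) (z : 'cV[R]_d) : Prop :=
  X z /\
  cost p q C f y x t.-1 + f z (y t) + memcost p q C z x t%:Z
    + Gterm p q T C z x xpi t
  <= lambda * cost p q C f y xpi t + B.

Definition is_erl_run (p : R) (d m q T : nat) (C : nat -> 'M[R]_d)
  (X : set 'cV[R]_d) (f : 'cV[R]_d -> 'cV[R]_m -> R) (y : nat -> 'cV[R]_m)
  (lambda B : R) (init xpi : int -> 'cV[R]_d) (xt : nat -> 'cV[R]_d)
  (x : int -> 'cV[R]_d) : Prop :=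
  starts_from init x /\
  forall t : nat, (1 <= t <= T)%N ->
    erl_feasible p q T C X f y lambda B x xpi t (x t%:Z) /\
    forall z, erl_feasible p q T C X f y lambda B x xpi t z ->
      (1/2) * lpnorm p (x t%:Z - xt t) ^+ 2 <= (1/2) * lpnorm p (z - xt t) ^+ 2.

Definition opt_cost (p : R) (d m q T : nat) (C : nat -> 'M[R]_d)
  (X : set 'cV[R]_d) (f : 'cV[R]_d -> 'cV[R]_m -> R) (y : nat -> 'cV[R]_m)
  (init : int -> 'cV[R]_d) : R :=
  inf [set cost p q C f y x T | x in
        [set x | starts_from init x /\ forall t : nat, (1 <= t <= T)%N -> X (x t%:Z)]].

End Defs.

(* Against any feasible
   trajectory x', polyhedrality gives alpha ||x'_t - xr_t|| <= f(x'_t) - f(xr_t),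
   while the triangle inequality and the operator norms bound the memory cost of
   Robust by that of x' plus (1 + beta) times the total distance between the two
   trajectories (a displacement at time s re-enters at times s + i through C_i
   only).  Hence cost(Robust) <= max((beta + 1) / alpha, 1) cost(x') for every
   feasible x', so also against OPT.  Finally, ERL's constraint at the last
   step, whose G term is nonnegative, gives cost(ERL) <= lambda cost(Robust) + B. *)

From mathcomp Require Import all_boot all_order all_algebra.
From mathcomp Require Import all_classical all_reals all_analysis.
From mathcomp Require Import ring lra.
Import Order.TTheory GRing.Theory Num.Theory.
Local Open Scope ring_scope.

Section LpNorm.
Context {R : realType} {p : R}.
Hypothesis p_ge1 : 1 <= p.

Let p_gt0 : 0 < p. Proof. exact: lt_le_trans p_ge1. Qed.

Lemma lpnorm_ge0 {d} (v : 'cV[R]_d) : 0 <= lpnorm p v.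
Proof. exact: powR_ge0. Qed.

Lemma powR_lpnorm {d} (v : 'cV[R]_d) : lpnorm p v `^ p = \sum_(i < d) `|v i 0| `^ p.
Proof.
rewrite /lpnorm -powRrM mulVf ?gt_eqF // powRr1 //.
by apply: sumr_ge0 => i _; exact: powR_ge0.
Qed.

Lemma lpnorm0_eq0 {d} (v : 'cV[R]_d) : lpnorm p v = 0 -> v = 0.
Proof.
move/powR_eq0_eq0/eqP; rewrite psumr_eq0 => [/allP v0|i _]; last exact: powR_ge0.
apply/matrixP => i j; rewrite (ord1 j) mxE.
by move/eqP/powR_eq0_eq0/normr0_eq0: (v0 i (mem_index_enum i)).
Qed.

Lemma lpnorm0 {d} : lpnorm p (0 : 'cV[R]_d) = 0.
Proof.
by rewrite /lpnorm big1 ?powR0 ?invr_eq0 ?gt_eqF // => i _; rewrite mxE normr0 powR0 ?gt_eqF.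
Qed.

Lemma lpnormN {d} (v : 'cV[R]_d) : lpnorm p (- v) = lpnorm p v.
Proof. by rewrite /lpnorm; under eq_bigr do rewrite mxE normrN. Qed.

Lemma lpnormZ {d} (c : R) (v : 'cV[R]_d) : lpnorm p (c *: v) = `|c| * lpnorm p v.
Proof.
rewrite /lpnorm; under eq_bigr do rewrite mxE normrM powRM //.
rewrite -mulr_sumr powRM ?powR_ge0 //; last by apply: sumr_ge0 => i _; exact: powR_ge0.
by rewrite -powRrM mulfV ?gt_eqF // powRr1.
Qed.

Lemma powR_convex_splitD (t u v : R) : 0 < t < 1 -> 0 <= u -> 0 <= v ->
  (u + v) `^ p <= t * (u / t) `^ p + (1 - t) * (v / (1 - t)) `^ p.
Proof.
move=> /andP[t0 t1] u0 v0; have t1' : 0 < 1 - t by rewrite subr_gt0.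
have := @convex_powR R p p_ge1 (@Itv01 R t (ltW t0) (ltW t1)) (u / t) (v / (1 - t)).
rewrite !inE /= !in_itv /= !andbT.
move=> /(_ (divr_ge0 u0 (ltW t0)) (divr_ge0 v0 (ltW t1'))) conv_le.
rewrite [X in X `^ _ <= _]convRE !convRE /= in conv_le.
by rewrite /unstable.onem (mulrC t) (mulrC (1 - t)) !divfK ?gt_eqF in conv_le.
Qed.

Lemma lpnormD_powR_le {d} (t : R) (u v : 'cV[R]_d) : 0 < t < 1 ->
  lpnorm p (u + v) `^ p <= t * (lpnorm p u / t) `^ p + (1 - t) * (lpnorm p v / (1 - t)) `^ p.
Proof.
move=> t01; have /andP[t_gt0 t_lt1] := t01; have t'_gt0 : 0 < 1 - t by rewrite subr_gt0.
have scaled_sum (s : R) (w : 'cV[R]_d) : 0 < s ->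
    \sum_(i < d) (`|w i 0| / s) `^ p = (lpnorm p w / s) `^ p.
  move=> s_gt0; rewrite mulrC -[s^-1]ger0_norm ?invr_ge0 ?(ltW s_gt0) // -lpnormZ powR_lpnorm.
  by apply: eq_bigr => i _; rewrite mxE normrM mulrC.
rewrite powR_lpnorm -!scaled_sum // !mulr_sumr -big_split /=.
apply: ler_sum => i _.
apply: le_trans (powR_convex_splitD _ _ _ t01 (normr_ge0 _) (normr_ge0 _)).
apply: ge0_ler_powR; rewrite ?nnegrE ?addr_ge0 //; first exact: ltW.
by rewrite mxE ler_normD.
Qed.

Lemma le_of_powR_convex_split (a b N : R) : 0 < a -> 0 < b -> 0 <= N ->
  (forall t, 0 < t < 1 -> N `^ p <= t * (a / t) `^ p + (1 - t) * (b / (1 - t)) `^ p) ->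
  N <= a + b.
Proof.
move=> a_gt0 b_gt0 N_ge0 split_le; have ab_gt0 : 0 < a + b by rewrite addr_gt0.
pose t := a / (a + b).
have t01 : 0 < t < 1 by rewrite divr_gt0 //= ltr_pdivrMr // mul1r ltrDl.
(* for this [t] both rescaled terms equal [a + b] *)
have := split_le t t01.
have -> : a / t = a + b by rewrite /t; field; rewrite !gt_eqF.
have -> : b / (1 - t) = a + b by rewrite /t; field; rewrite addrAC subrr add0r !gt_eqF.
rewrite -mulrDl subrKC mul1r => powR_le.
rewrite leNgt; apply/negP => /(gt0_ltr_powR p_gt0).
by rewrite !nnegrE N_ge0 ltW // => /(_ isT isT); rewrite ltNge powR_le.
Qed.

Lemma ler_lpnormD {d} (u v : 'cV[R]_d) : lpnorm p (u + v) <= lpnorm p u + lpnorm p v.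
Proof.
have [/lpnorm0_eq0 ->|u_neq0] := eqVneq (lpnorm p u) 0; first by rewrite add0r lpnorm0 add0r.
have [/lpnorm0_eq0 ->|v_neq0] := eqVneq (lpnorm p v) 0; first by rewrite addr0 lpnorm0 addr0.
have norm_gt0 (w : 'cV[R]_d) : lpnorm p w != 0 -> 0 < lpnorm p w.
  by rewrite lt0r => ->; exact: lpnorm_ge0.
apply: (le_of_powR_convex_split _ _ _ (norm_gt0 _ u_neq0) (norm_gt0 _ v_neq0)).
  exact: lpnorm_ge0.
by move=> t; exact: lpnormD_powR_le.
Qed.

Lemma ler_lpnorm_sum {d} (I : Type) (r : seq I) (P : pred I) (F : I -> 'cV[R]_d) :
  lpnorm p (\sum_(i <- r | P i) F i) <= \sum_(i <- r | P i) lpnorm p (F i).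
Proof.
apply: (big_rec2 (fun a b => lpnorm p a <= b)); first by rewrite lpnorm0.
by move=> i a b _ IH; apply: le_trans (ler_lpnormD _ _) _; rewrite lerD2l.
Qed.

Lemma lpnorm1_coord_le1 {d} (w : 'cV[R]_d) (j : 'I_d) : lpnorm p w = 1 -> `|w j 0| <= 1.
Proof.
move=> w1; have := powR_lpnorm w; rewrite w1 powR1 => sum1.
rewrite leNgt; apply/negP => w_gt1.
have : `|w j 0| `^ p <= 1.
  by rewrite sum1 (bigD1 j) //= lerDl; apply: sumr_ge0 => i _; exact: powR_ge0.
by rewrite leNgt (lt_le_trans w_gt1) // le1r_powR // ltW.
Qed.

Lemma mulmx_sum_col {d} (A : 'M[R]_d) (v : 'cV[R]_d) :
  A *m v = \sum_(j < d) v j 0 *: col j A.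
Proof.
apply/matrixP => i k; rewrite !mxE summxE; apply: eq_bigr => j _.
by rewrite !mxE (ord1 k) mulrC.
Qed.

Lemma lpnorm_mulmx_le_sum_col {d} (A : 'M[R]_d) (v : 'cV[R]_d) :
  lpnorm p v = 1 -> lpnorm p (A *m v) <= \sum_(j < d) lpnorm p (col j A).
Proof.
move=> v1; rewrite mulmx_sum_col; apply: le_trans (ler_lpnorm_sum _ _ _ _) _.
apply: ler_sum => j _; rewrite lpnormZ -[leRHS]mul1r.
by apply: ler_wpM2r; [exact: lpnorm_ge0 | exact: lpnorm1_coord_le1].
Qed.

Lemma opnorm_ub {d} (A : 'M[R]_d) (v : 'cV[R]_d) :
  lpnorm p v = 1 -> lpnorm p (A *m v) <= opnorm p A.
Proof.
move=> v1; apply: sup_upper_bound; last by exists v.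
split; first by exists (lpnorm p (A *m v)), v.
by exists (\sum_(j < d) lpnorm p (col j A)) => _ [w w1 <-]; exact: lpnorm_mulmx_le_sum_col.
Qed.

Lemma opnorm_ge0 {d} (A : 'M[R]_d) : 0 <= opnorm p A.
Proof.
have [[v v1]|no_unit] := pselect (exists v : 'cV[R]_d, lpnorm p v = 1).
  apply: le_trans (opnorm_ub A _ v1); exact: lpnorm_ge0.
have -> : opnorm p A = sup (@set0 R).
  by congr sup; apply/seteqP; split => // r [v v1 _]; apply: no_unit; exists v.
by rewrite sup0.
Qed.

Lemma ler_lpnorm_mulmx {d} (A : 'M[R]_d) (v : 'cV[R]_d) :
  lpnorm p (A *m v) <= opnorm p A * lpnorm p v.
Proof.
have [/lpnorm0_eq0 ->|v_neq0] := eqVneq (lpnorm p v) 0.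
  by rewrite mulmx0 lpnorm0 mulr0.
have v_gt0 : 0 < lpnorm p v by rewrite lt0r v_neq0; exact: lpnorm_ge0.
have unit_v : lpnorm p ((lpnorm p v)^-1 *: v) = 1.
  by rewrite lpnormZ ger0_norm ?invr_ge0 ?(ltW v_gt0) // mulVf.
have := opnorm_ub A _ unit_v; rewrite -scalemxAr lpnormZ ger0_norm ?invr_ge0 ?(ltW v_gt0) //.
by rewrite ler_pdivrMl // mulrC.
Qed.

End LpNorm.

Section Delay.
Context {R : numDomainType}.
Implicit Types (E : int -> R) (T : nat).

Lemma sum_delay1 E T : (forall k : int, k <= 0 -> E k = 0) ->
  \sum_(1 <= t < T.+1) E (t%:Z - 1) + E T%:Z = \sum_(1 <= t < T.+1) E t%:Z.
Proof.
move=> E0; elim: T => [|T IH]; first by rewrite !big_geq // add0r (E0 0).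
rewrite big_nat_recr //= [RHS]big_nat_recr //= -IH.
by have -> : T.+1%:Z - 1 = T%:Z by rewrite -addn1 PoszD addrK.
Qed.

Lemma ler_sum_delay E T (i : nat) : (forall k, 0 <= E k) -> (forall k : int, k <= 0 -> E k = 0) ->
  \sum_(1 <= t < T.+1) E (t%:Z - i%:Z) <= \sum_(1 <= t < T.+1) E t%:Z.
Proof.
elim: i E => [|i IH] E E_ge0 E0; first by under eq_bigr do rewrite subr0.
have E0' (k : int) : k <= 0 -> E (k - 1) = 0.
  by move=> k_le0; apply: E0; rewrite lerBlDr add0r (le_trans k_le0).
have -> : \sum_(1 <= t < T.+1) E (t%:Z - i.+1%:Z) = \sum_(1 <= t < T.+1) E (t%:Z - i%:Z - 1).
  by apply: eq_bigr => t _; rewrite -addn1 PoszD opprD addrA.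
apply: le_trans (IH (fun k => E (k - 1)) (fun k => E_ge0 _) E0') _.
by rewrite -(sum_delay1 E T E0) lerDl.
Qed.

End Delay.

Definition opnorm_sum {R : realType} {d} (p : R) (q : nat) (C : nat -> 'M[R]_d) : R :=
  \sum_(1 <= i < q.+1) opnorm p (C i).

Section MemoryCost.
Context {R : realType} {p : R} {d m q : nat} {C : nat -> 'M[R]_d}
  {f : 'cV[R]_d -> 'cV[R]_m -> R} {y : nat -> 'cV[R]_m}.
Hypothesis p_ge1 : 1 <= p.

Lemma memcost_le_perturb (z w : int -> 'cV[R]_d) (t : int) :
  memcost p q C (w t) w t <= memcost p q C (z t) z t + lpnorm p (z t - w t)
    + \sum_(1 <= i < q.+1) opnorm p (C i) * lpnorm p (z (t - i%:Z) - w (t - i%:Z)).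
Proof.
rewrite /memcost; set Sz := \sum_(1 <= i < _) _ *m z _; set Sw := \sum_(1 <= i < _) _ *m w _.
have -> : w t - Sw = (z t - Sz) - (z t - w t) + (Sz - Sw).
  by rewrite opprB addrAC subrKA addrC subrKA.
apply: le_trans (ler_lpnormD p_ge1 _ _) _; apply: lerD.
  by apply: le_trans (ler_lpnormD p_ge1 _ _) _; rewrite lpnormN.
rewrite /Sz /Sw -sumrB; apply: le_trans (ler_lpnorm_sum p_ge1 _ _ _ _) _.
by apply: ler_sum => i _; rewrite -mulmxBr; exact: ler_lpnorm_mulmx.
Qed.

Lemma cost_le_perturb (z w : int -> 'cV[R]_d) (T : nat) :
  (forall k : int, k <= 0 -> z k = w k) ->
  cost p q C f y w T <= \sum_(1 <= t < T.+1) f (w t%:Z) (y t)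
    + \sum_(1 <= t < T.+1) memcost p q C (z t%:Z) z t%:Z
    + (1 + opnorm_sum p q C) * \sum_(1 <= t < T.+1) lpnorm p (z t%:Z - w t%:Z).
Proof.
move=> zw; pose E k := lpnorm p (z k - w k).
have E_ge0 k : 0 <= E k by exact: lpnorm_ge0.
have E0 (k : int) : k <= 0 -> E k = 0 by move=> k_le0; rewrite /E zw // subrr lpnorm0.
rewrite /cost big_split /= -!addrA lerD2l.
apply: (@le_trans _ _ (\sum_(1 <= t < T.+1) (memcost p q C (z t%:Z) z t%:Z + E t%:Z
    + \sum_(1 <= i < q.+1) opnorm p (C i) * E (t%:Z - i%:Z)))).
  by apply: ler_sum_nat => t _; exact: memcost_le_perturb.
rewrite !big_split /= -addrA lerD2l mulrDl mul1r lerD2l.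
rewrite exchange_big_nat /opnorm_sum mulr_suml; apply: ler_sum_nat => i _.
by rewrite -mulr_sumr; apply: ler_wpM2l; [exact: opnorm_ge0 | exact: ler_sum_delay].
Qed.

Lemma robust_cost_le (alpha : R) (xr x : int -> 'cV[R]_d) (T : nat) : 0 < alpha ->
  (forall k : int, k <= 0 -> x k = xr k) ->
  (forall t : nat, (1 <= t <= T)%N -> 0 <= f (xr t%:Z) (y t)) ->
  (forall t : nat, (1 <= t <= T)%N ->
     alpha * lpnorm p (x t%:Z - xr t%:Z) <= f (x t%:Z) (y t) - f (xr t%:Z) (y t)) ->
  cost p q C f y xr T <= Num.max ((opnorm_sum p q C + 1) / alpha) 1 * cost p q C f y x T.
Proof.
move=> alpha_gt0 x_xr fr_ge0 gap.
set M := Num.max _ _; set beta := opnorm_sum p q C.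
set Fr := \sum_(1 <= t < T.+1) f (xr t%:Z) (y t).
set F := \sum_(1 <= t < T.+1) f (x t%:Z) (y t).
set Mem := \sum_(1 <= t < T.+1) memcost p q C (x t%:Z) x t%:Z.
set D := \sum_(1 <= t < T.+1) lpnorm p (x t%:Z - xr t%:Z).
have D_gap : alpha * D <= F - Fr by rewrite mulr_sumr -sumrB; exact: ler_sum_nat.
have Fr_ge0 : 0 <= Fr by rewrite /Fr big_nat_cond; apply: sumr_ge0 => t /andP[t_in _]; exact: fr_ge0.
have Mem_ge0 : 0 <= Mem by apply: sumr_ge0 => t _; exact: lpnorm_ge0.
have D_ge0 : 0 <= D by apply: sumr_ge0 => t _; exact: lpnorm_ge0.
have beta_ge0 : 0 <= beta by apply: sumr_ge0 => i _; exact: opnorm_ge0.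
have M_ge1 : 1 <= M by rewrite le_max lexx orbT.
have D_le : (1 + beta) * D <= M * (F - Fr).
  apply: le_trans _ (ler_wpM2l (le_trans ler01 M_ge1) D_gap).
  by rewrite mulrA ler_wpM2r // -ler_pdivrMr // addrC le_max lexx.
apply: le_trans (cost_le_perturb x xr T x_xr) _.
rewrite /cost big_split /=; change (Fr + Mem + (1 + beta) * D <= M * (F + Mem)).
(* [M >= 1] absorbs [Fr] and [Mem], both nonnegative *)
nra.
Qed.

End MemoryCost.

Lemma polyhedral_minimizer_gap {R : realType} {d} {p alpha : R} {X : set 'cV[R]_d}
    {g : 'cV[R]_d -> R} {z : 'cV[R]_d} :
  polyhedral p alpha X g -> X z -> (forall x, X x -> g z <= g x) ->
  forall x, X x -> alpha * lpnorm p (x - z) <= g x - g z.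
Proof.
by move=> [xs [_ [_ [xs_unique gap]]]] Xz z_min; rewrite (xs_unique z Xz z_min).
Qed.

Lemma erl_cost_le {R : realType} {d m q T : nat} {p lambda B : R} {C : nat -> 'M[R]_d}
    {X : set 'cV[R]_d} {f : 'cV[R]_d -> 'cV[R]_m -> R} {y : nat -> 'cV[R]_m}
    {init xpi : int -> 'cV[R]_d} {xt : nat -> 'cV[R]_d} {x : int -> 'cV[R]_d} :
  0 <= B -> is_erl_run p q T C X f y lambda B init xpi xt x ->
  cost p q C f y x T <= lambda * cost p q C f y xpi T + B.
Proof.
move=> B_ge0 [_ erl]; have [->|T_gt0] := posnP T.
  have cost0 z : cost p q C f y z 0 = 0 by rewrite /cost big_geq.
  by rewrite !cost0 mulr0 add0r.
have [[_ constraintT] _] := erl T (andb_true_intro (conj T_gt0 (leqnn T))).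
apply: le_trans constraintT; rewrite /cost -[in leLHS](prednK T_gt0) big_nat_recr ?prednK //=.
by rewrite addrA lerDl; apply: sumr_ge0 => k _; exact: lpnorm_ge0.
Qed.

Lemma le_opt_cost {R : realType} {d m q T : nat} {p : R} {C : nat -> 'M[R]_d}
    {X : set 'cV[R]_d} {f : 'cV[R]_d -> 'cV[R]_m -> R} {y : nat -> 'cV[R]_m}
    {init x0 : int -> 'cV[R]_d} {c M : R} :
  0 < M -> starts_from init x0 -> (forall t : nat, (1 <= t <= T)%N -> X (x0 t%:Z)) ->
  (forall x, starts_from init x -> (forall t : nat, (1 <= t <= T)%N -> X (x t%:Z)) ->
     c <= M * cost p q C f y x T) ->
  c <= M * opt_cost p q T C X f y init.
Proof.
move=> M_gt0 x0_init x0_X c_le.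
rewrite -ler_pdivrMl //; apply: lb_le_inf; first by exists (cost p q C f y x0 T), x0.
by move=> _ [x [x_init x_X] <-]; rewrite ler_pdivrMl //; exact: c_le.
Qed.

Theorem corollary2 (R : realType) (d m q T : nat) (p alpha lambda B : R)
  (X : set 'cV[R]_d) (Y : set 'cV[R]_m) (f : 'cV[R]_d -> 'cV[R]_m -> R)
  (C : nat -> 'M[R]_d) (init : int -> 'cV[R]_d) (y : nat -> 'cV[R]_m)
  (xpi : int -> 'cV[R]_d) (xt : nat -> 'cV[R]_d) (x : int -> 'cV[R]_d) :
  1 <= p -> (1 <= q)%N ->
  (forall u v, X u -> Y v -> 0 <= f u v) ->
  (forall k : int, 1 - q%:Z <= k <= 0 -> X (init k)) ->
  (forall t : nat, (1 <= t <= T)%N -> Y (y t)) ->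
  0 < alpha ->
  (forall t : nat, (1 <= t <= T)%N -> polyhedral p alpha X (fun u => f u (y t))) ->
  1 <= lambda -> 0 <= B ->
  is_robust T X f y init xpi ->
  is_erl_run p q T C X f y lambda B init xpi xt x ->
  let beta := \sum_(1 <= i < q.+1) opnorm p (C i) in
  cost p q C f y x T
    <= lambda * Num.max ((beta + 1) / alpha) 1 * opt_cost p q T C X f y init + B.
Proof.
move=> p_ge1 _ f_ge0 _ Yy alpha_gt0 poly lambda_ge1 B_ge0 [xpi_init robust] erl /=.
have M_gt0 : 0 < Num.max ((opnorm_sum p q C + 1) / alpha) 1 by rewrite lt_max ltr01 orbT.
apply: le_trans (erl_cost_le B_ge0 erl) _.
rewrite lerD2r -mulrA ler_wpM2l ?(le_trans ler01 lambda_ge1) //.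
apply: (le_opt_cost M_gt0 xpi_init) => [t /robust[] //|x' x'_init x'_X].
apply: (robust_cost_le p_ge1 _ _ _ _ alpha_gt0).
- by move=> k k_le0; rewrite x'_init // xpi_init.
- by move=> t t_in; have [Xt _] := robust t t_in; exact: f_ge0 Xt (Yy t t_in).
- move=> t t_in; have [Xt t_min] := robust t t_in.
  exact: polyhedral_minimizer_gap (poly t t_in) Xt t_min _ (x'_X t t_in).
Qed.
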